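(* Let $(N,+,* )$ be a finite planar nearring with $D(N)\ne\{0\}$. Write $(N,+)=N_1\oplus\cdots\oplus N_k$ as the direct sum of its Sylow $p$-subgroups (for distinct primes). Then there is an index $i$ such that for every $j\ne i$ every element of $N_j$ is a zero multiplier (so only the summand $N_i$ carries a nontrivial multiplication).
   Context: A (right) nearring $(N,+,* )$ is a set with a group $(N,+)$, a semigroup $(N,* )$, and right distributivity $(a+b)*c=a*c+b*c$. $N$ is planar if the relation $a\cong b$ ($x*a=x*b$ for all $x$) has at least $3$ classes and for all $a,b,c$ with $a\not\cong b$ the equation $x*a=x*b+c$ has a unique solution. The additive group of a finite planar nearring is nilpotent. The zero multipliers are the $n\in N$ with $x*n=0$ for all $x\in N$. $D(N)=\{n: n*(a+b)=n*a+n*b\ \forall a,b\}$. *)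

(* The additive group (N,+) of a nearring need not be
   abelian, so we model it as a finGroupType T whose group law mulg (written
   multiplicatively, identity 1) plays the role of "+", and whose nearring
   multiplication is a separate binary operation [mul]. *)
From HB Require Import structures.
From mathcomp Require Import all_boot all_fingroup all_solvable.
Set Implicit Arguments. Unset Strict Implicit. Unset Printing Implicit Defensive.

Local Open Scope group_scope.

Definition is_nearring (T : finGroupType) (mul : T -> T -> T) : Prop :=
  (forall a b c : T, mul (mul a b) c = mul a (mul b c)) /\
  (forall a b c : T, mul (a * b) c = mul a c * mul b c).

Definition nr_equiv (T : finGroupType) (mul : T -> T -> T) (a b : T) : Prop :=
  forall x : T, mul x a = mul x b.

Definition is_planar (T : finGroupType) (mul : T -> T -> T) : Prop :=
  (exists a b c : T, ~ nr_equiv mul a b /\ ~ nr_equiv mul a c /\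
                     ~ nr_equiv mul b c) /\
  (forall a b c : T, ~ nr_equiv mul a b ->
     exists! x : T, mul x a = mul x b * c).

Definition zero_multiplier (T : finGroupType) (mul : T -> T -> T) (n : T) : Prop :=
  forall x : T, mul x n = 1.

Definition distributive_elt (T : finGroupType) (mul : T -> T -> T) (n : T) : Prop :=
  forall a b : T, mul n (a * b) = mul n a * mul n b.

From HB Require Import structures.
From mathcomp Require Import all_boot all_fingroup all_solvable.

(* Right multiplication x |-> x * s is an endomorphism of (N,+), injective
   unless s is a zero multiplier (planarity), so it preserves element orders;
   left multiplication by a distributive n is an endomorphism too.  Hence
   #[n] = #[n * s] divides #[s] for every s that is not a zero multiplier.
   Taking s = a^k for a fixed non-zero-multiplier a shows that every nontrivial
   power of n * a has order #[n], which forces #[n] to be a prime p; an element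
   of a Sylow q-subgroup with q != p has q-power order and so must be a zero
   multiplier. *)

Set Implicit Arguments.
Unset Strict Implicit.
Unset Printing Implicit Defensive.

Local Open Scope group_scope.

Section Endomorphism.

Variables (gT : finGroupType) (f : gT -> gT).
Hypothesis fM : {morph f : x y / x * y}.

Let fm : {morphism [set: gT] >-> gT} := Morphism (in2W fM).

Lemma endo_morph1 : f 1 = 1.
Proof. exact: (morph1 fm). Qed.

Lemma endo_morphX x k : f (x ^+ k) = f x ^+ k.
Proof. exact: (morphX fm k (in_setT x)). Qed.

Lemma endo_order_dvd x : (#[f x] %| #[x])%N.
Proof. exact: (morph_order fm (in_setT x)). Qed.

Lemma endo_order_inj x : injective f -> #[f x] = #[x].
Proof.
by move=> f_inj; apply: (order_injm (f := fm)) => //; apply/injmP; apply: in2W.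
Qed.

End Endomorphism.

Lemma prime_order_of_powers (gT : finGroupType) (g : gT) :
  (1 < #[g])%N -> (forall k, g ^+ k != 1 -> #[g ^+ k] = #[g]) -> prime #[g].
Proof.
move=> g_gt1 powers_g; set r := pdiv #[g].
have r_prime : prime r := pdiv_prime g_gt1.
have r_dvd : (r %| #[g])%N := pdiv_dvd #[g].
have order_gk : #[g ^+ (#[g] %/ r)] = r.
  rewrite orderXdiv ?dvdn_div // -{1}(divnK r_dvd) mulKn //.
  by rewrite divn_gt0 ?prime_gt0 // dvdn_leq.
have gk_neq1 : g ^+ (#[g] %/ r) != 1.
  by rewrite -order_eq1 order_gk; apply: contraTneq (prime_gt1 r_prime) => ->.
by rewrite -(powers_g _ gk_neq1) order_gk.
Qed.

Section PlanarNearring.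

Variables (T : finGroupType) (mul : T -> T -> T).
Hypotheses (hN : is_nearring mul) (hP : is_planar mul).

Lemma mulr_morph s : {morph mul^~ s : x y / x * y}.
Proof. by move=> x y; case: hN => _ ->. Qed.

Lemma nr_mul1l s : mul 1 s = 1.
Proof. exact: endo_morph1 (mulr_morph s). Qed.

(* Uniqueness of the solution of x * a = x * b * 1 for a non-equivalent pair
   a, b: both 1 and x * 1 are solutions, since x * 1 * c = x * (1 * c). *)
Lemma nr_mul1r x : mul x 1 = 1.
Proof.
case: hP => -[a [b [c [not_ab _]]]] planar; case: hN => mulA _.
have [z [_ z_uniq]] := planar a b 1 not_ab.
have x1_sol : mul (mul x 1) a = mul (mul x 1) b * 1.
  by rewrite !mulA !nr_mul1l mulg1.
have one_sol : mul 1 a = mul 1 b * 1 by rewrite !nr_mul1l mulg1.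
by rewrite -(z_uniq _ x1_sol) (z_uniq _ one_sol).
Qed.

Lemma zero_multiplierP s :
  reflect (zero_multiplier mul s) [forall x, mul x s == 1].
Proof. by apply: (iffP forallP) => zs x; apply/eqP. Qed.

Lemma exists_nonzero_multiplier : exists s, ~ zero_multiplier mul s.
Proof.
case: hP => -[a [b [_ [not_ab _]]]] _.
have [za|] := zero_multiplierP a; last by exists a.
have [zb|] := zero_multiplierP b; last by exists b.
by case: not_ab => x; rewrite za zb.
Qed.

(* Both x and y solve z * s = z * 1 * (x * s), whose solution is unique. *)
Lemma mulr_inj s : ~ zero_multiplier mul s -> injective (mul^~ s).
Proof.
move=> nz_s x y /= xs_ys; case: hP => _ planar.
have not_s1 : ~ nr_equiv mul s 1 by move=> s1; apply: nz_s => z; rewrite s1 nr_mul1r.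
have [z [_ z_uniq]] := planar s 1 (mul x s) not_s1.
have x_sol : mul x s = mul x 1 * mul x s by rewrite nr_mul1r mul1g.
have y_sol : mul y s = mul y 1 * mul x s by rewrite nr_mul1r mul1g xs_ys.
by rewrite -(z_uniq _ x_sol) (z_uniq _ y_sol).
Qed.

Lemma order_mulr s x : ~ zero_multiplier mul s -> #[mul x s] = #[x].
Proof. by move=> nz_s; apply: (endo_order_inj (mulr_morph s) x (mulr_inj nz_s)). Qed.

Variable n : T.
Hypothesis n_distr : distributive_elt mul n.

Lemma order_distributive_dvd s : ~ zero_multiplier mul s -> (#[n] %| #[s])%N.
Proof. by move=> nz_s; rewrite -(order_mulr n nz_s); apply: endo_order_dvd. Qed.

Lemma prime_order_distributive : n != 1 -> prime #[n].
Proof.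
move=> n_neq1; have [a nz_a] := exists_nonzero_multiplier.
rewrite -(order_mulr n nz_a); apply: prime_order_of_powers => [|k].
  by rewrite order_mulr // ltn_neqAle order_gt0 andbT eq_sym order_eq1.
rewrite -endo_morphX // => nak_neq1; rewrite !order_mulr //.
by move=> z_ak; rewrite z_ak eqxx in nak_neq1.
Qed.

End PlanarNearring.

Theorem mainTheorem7 (T : finGroupType) (mul : T -> T -> T)
  (hN : is_nearring mul) (hP : is_planar mul)
  (hD : exists n : T, n != 1 /\ distributive_elt mul n) :
  exists p : nat, [/\ prime p, (p %| #|[set: T]|)%N &
    forall q : nat, prime q -> q != p ->
      forall S : {group T}, q.-Sylow([set: T]) S ->
        forall n : T, n \in S -> zero_multiplier mul n].
Proof.
have [n [n_neq1 n_distr]] := hD.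
have p_prime := prime_order_distributive hN hP n_distr n_neq1.
exists #[n]; split=> // [|q q_prime q_neq_p S sylS s Ss].
  by apply: order_dvdG; rewrite inE.
have [//|nz_s] := zero_multiplierP mul s.
have q_elt_s : q.-elt s := mem_p_elt (pHall_pgroup sylS) Ss.
have := pnat_dvd (order_distributive_dvd hN hP n_distr nz_s) q_elt_s.
by rewrite pnatE // inE eq_sym (negPf q_neq_p).
Qed.
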